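(* Let $B\in\mathcal A_n$. The ASMs covered by $B$ in ASM order are exactly the matrices $r_{i,i+1}^{k,k+1}(B)$ where $R_{i,i+1}^{k,k+1}$ ranges over the essential points of $B$, and distinct essential points give distinct such ASMs; thus essential points of $B$ are in bijection with the elements covered by $B$. Consequently, every covering relation $A\lessdot B$ in ASM order is an edge $A\to B$ of the ASM graph.
   Context: $\mathcal A_n$ is the set of $n\times n$ alternating sign matrices (entries in $\{-1,0,1\}$, partial row and column sums in $\{0,1\}$, full row and column sums $1$). The corner sum matrix is $\widetilde A(i,j)=\sum_{p\le i,q\le j}a_{pq}$, with $\widetilde A(i,j)=0$ if $i=0$ or $j=0$. ASM order: $A\le B$ iff $\widetilde A(i,j)\ge\widetilde B(i,j)$ for all $i,j$. For $i<j$, $k<l$ in $[n]$, $R_{ij}^{kl}=\{(p,q): i\le p<j,\ k\le q<l\}$ and $\widetilde R_{ij}^{kl}$ is its $0/1$ indicator matrix. $E(A)$ (essential rectangles): those $R_{ij}^{kl}$ with, for all $(p,q)\in R_{ij}^{kl}$, $\widetilde A(p,k)=\widetilde A(p,k-1)$, $\widetilde A(p,l)=\widetilde A(p,l-1)+1$, $\widetilde A(i,q)=\widetilde A(i-1,q)$, $\widetilde A(j,q)=\widetilde A(j-1,q)+1$. $E^*(A)$ (dual essential rectangles): those with $\widetilde A(p,k)=\widetilde A(p,k-1)+1$, $\widetilde A(p,l)=\widetilde A(p,l-1)$, $\widetilde A(i,q)=\widetilde A(i-1,q)+1$, $\widetilde A(j,q)=\widetilde A(j-1,q)$. An essential point of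 $A$ is an essential rectangle $R_{ij}^{kl}\in E(A)$ with $j=i+1$ and $l=k+1$. The operator $r_{ij}^{kl}$ sends $A$ to the ASM with corner sum matrix $\widetilde A+\widetilde R_{ij}^{kl}$ if $R_{ij}^{kl}\in E(A)$, $\widetilde A-\widetilde R_{ij}^{kl}$ if $R_{ij}^{kl}\in E^*(A)$, $\widetilde A$ otherwise. The bigrassmannian statistic is $\beta(A)=\sum_{i,j}\min(i,j)-\sum_{i,j}\widetilde A(i,j)$. ASM graph edge: $A\to B$ if $B=r_{ij}^{kl}(A)$ for some $i<j$, $k<l$ and $\beta(A)<\beta(B)$. *)

From HB Require Import structures.
From mathcomp Require Import all_boot all_order all_algebra.
Set Implicit Arguments. Unset Strict Implicit. Unset Printing Implicit Defensive.
Import Order.TTheory GRing.Theory Num.Theory.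
Local Open Scope ring_scope.

(* n x n integer matrices; matrix entries are 0-based (p : 'I_n),
   while corner sums / rectangles use the paper's 1-based indices. *)
Section ASM.
Variable n : nat.

Definition is_asm (A : 'M[int]_n) : Prop :=
  [/\ (forall i j, A i j \in [:: -1; 0; 1]),
      (forall (i : 'I_n) (m : nat), (m <= n)%N ->
         \sum_(q < n | (q < m)%N) A i q \in [:: 0; 1]),
      (forall (j : 'I_n) (m : nat), (m <= n)%N ->
         \sum_(p < n | (p < m)%N) A p j \in [:: 0; 1]),
      (forall i : 'I_n, \sum_(q < n) A i q = 1) &
      (forall j : 'I_n, \sum_(p < n) A p j = 1)].

Definition cs (A : 'M[int]_n) (i j : nat) : int :=
  \sum_(p < n | (p < i)%N) \sum_(q < n | (q < j)%N) A p q.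

Definition asm_le (A B : 'M[int]_n) : Prop :=
  forall i j : nat, (1 <= i <= n)%N -> (1 <= j <= n)%N -> cs B i j <= cs A i j.

Definition asm_lt (A B : 'M[int]_n) : Prop := asm_le A B /\ A <> B.

Definition asm_covers (A B : 'M[int]_n) : Prop :=
  [/\ is_asm A, is_asm B, asm_lt A B &
      ~ exists C, [/\ is_asm C, asm_lt A C & asm_lt C B]].

Definition rect_ok (i j k l : nat) : bool :=
  [&& (1 <= i)%N, (i < j)%N, (j <= n)%N, (1 <= k)%N, (k < l)%N & (l <= n)%N].

Definition inE (A : 'M[int]_n) (i j k l : nat) : bool :=
  rect_ok i j k l &&
  [forall p : 'I_n.+1, forall q : 'I_n.+1,
     ((i <= p < j)%N && (k <= q < l)%N) ==>
     [&& cs A p k == cs A p k.-1,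
         cs A p l == cs A p l.-1 + 1,
         cs A i q == cs A i.-1 q &
         cs A j q == cs A j.-1 q + 1]].

Definition inEstar (A : 'M[int]_n) (i j k l : nat) : bool :=
  rect_ok i j k l &&
  [forall p : 'I_n.+1, forall q : 'I_n.+1,
     ((i <= p < j)%N && (k <= q < l)%N) ==>
     [&& cs A p k == cs A p k.-1 + 1,
         cs A p l == cs A p l.-1,
         cs A i q == cs A i.-1 q + 1 &
         cs A j q == cs A j.-1 q]].

Definition rind (i j k l p q : nat) : int :=
  ((i <= p < j)%N && (k <= q < l)%N)%:R.

Definition r_cs (A : 'M[int]_n) (i j k l : nat) (p q : nat) : int :=
  if inE A i j k l then cs A p q + rind i j k l p q
  else if inEstar A i j k l then cs A p q - rind i j k l p q
  else cs A p q.

(* r_{ij}^{kl}(A): the matrix whose corner sum matrix is r_cs A i j k l *)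
Definition rop (A : 'M[int]_n) (i j k l : nat) : 'M[int]_n :=
  \matrix_(p < n, q < n)
    (r_cs A i j k l p.+1 q.+1 - r_cs A i j k l p q.+1
     - r_cs A i j k l p.+1 q + r_cs A i j k l p q).

Definition essential_point (A : 'M[int]_n) (i k : nat) : bool :=
  inE A i i.+1 k k.+1.

Definition beta (A : 'M[int]_n) : int :=
  \sum_(i < n) \sum_(j < n) (minn i.+1 j.+1)%:Z - \sum_(i < n) \sum_(j < n) cs A i.+1 j.+1.

Definition asm_edge (A B : 'M[int]_n) : Prop :=
  exists i j k l, [/\ rect_ok i j k l, B = rop A i j k l & beta A < beta B].

End ASM.

From Pilot Require Import Defs.
From HB Require Import structures.
From mathcomp Require Import all_boot all_order all_algebra.
From mathcomp Require Import zify ring.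
Set Implicit Arguments. Unset Strict Implicit. Unset Printing Implicit Defensive.
Import Order.TTheory GRing.Theory Num.Theory.
Local Open Scope ring_scope.

(* In corner-sum coordinates the ASM order is the reverse entrywise order, and
   the corner sums of an ASM step by 0 or 1 along rows and columns.  For an
   essential point (i, k) of B, adding 1 to tB at (i, k) keeps these steps in
   {0, 1}, so r(B) is an ASM one unit below B and nothing fits in between.
   Conversely, if A < B, pick among the points where tA > tB one maximising
   p + q - 2 tB(p, q); comparing with its four neighbours shows that it is an
   essential point of B, and then A <= r(B) < B, so A = r(B) when A is covered
   by B.  In r(B) the same point is a dual essential point, so the rectangle
   operator maps r(B) back to B, raising the bigrassmannian statistic by one. *)

Lemma ltr_sum_at (R : numDomainType) (I : finType) (F G : I -> R) (i0 : I) :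
  F i0 < G i0 -> (forall i, F i <= G i) -> \sum_i F i < \sum_i G i.
Proof.
move=> lt_i0 leFG; rewrite (bigD1 i0) // [X in _ < X](bigD1 i0) //.
by apply: ltr_leD => //; apply: ler_sum.
Qed.

Section CoveringRelations.
Variable n : nat.
Implicit Types A B C E : 'M[int]_n.

Lemma sum_ord_ltS (F : 'I_n -> int) (p : 'I_n) :
  \sum_(x < n | (x < p.+1)%N) F x = \sum_(x < n | (x < p)%N) F x + F p.
Proof.
rewrite (bigD1 p) //= addrC; congr (_ + _); apply: eq_bigl => x.
by rewrite ltnS -val_eqE /= leq_eqVlt; case: ltngtP.
Qed.

Lemma sum_ord_lt_geq (F : 'I_n -> int) m : (n <= m)%N ->
  \sum_(x < n | (x < m)%N) F x = \sum_(x < n) F x.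
Proof. by move=> le_nm; apply: eq_bigl => x; rewrite (leq_trans (ltn_ord x)). Qed.

Lemma cs0l A q : cs A 0 q = 0.
Proof. by rewrite /cs big_pred0. Qed.

Lemma cs0r A p : cs A p 0 = 0.
Proof. by rewrite /cs big1 // => i _; rewrite big_pred0. Qed.

Lemma cs_rowS A (p : 'I_n) q :
  cs A p.+1 q = cs A p q + \sum_(c < n | (c < q)%N) A p c.
Proof. exact: sum_ord_ltS. Qed.

Lemma cs_colS A p (q : 'I_n) :
  cs A p q.+1 = cs A p q + \sum_(r < n | (r < p)%N) A r q.
Proof. by rewrite /cs -big_split; apply: eq_bigr => r _; exact: sum_ord_ltS. Qed.

Lemma csSS A (p q : 'I_n) :
  cs A p.+1 q.+1 = A p q + cs A p q.+1 + cs A p.+1 q - cs A p q.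
Proof. rewrite !cs_rowS sum_ord_ltS; ring. Qed.

Definition mx_of_cs (f : nat -> nat -> int) : 'M[int]_n :=
  \matrix_(p < n, q < n) (f p.+1 q.+1 - f p q.+1 - f p.+1 q + f p q).

Lemma cs_mx_of_cs f : (forall q, f 0%N q = 0) -> (forall p, f p 0%N = 0) ->
  forall p q, (p <= n)%N -> (q <= n)%N -> cs (mx_of_cs f) p q = f p q.
Proof.
move=> f0l f0r p; elim: p => [|p IHp] q le_pn le_qn; first by rewrite cs0l f0l.
elim: q le_qn => [|q IHq] le_qn; first by rewrite cs0r f0r.
have := csSS (mx_of_cs f) (Ordinal le_pn) (Ordinal le_qn); rewrite mxE /= => ->.
rewrite IHp ?IHq ?IHp //; lia.
Qed.

Lemma cs_inj A C :
  (forall p q, (1 <= p <= n)%N -> (1 <= q <= n)%N -> cs A p q = cs C p q) -> A = C.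
Proof.
move=> eqAC.
have {}eqAC p q : (p <= n)%N -> (q <= n)%N -> cs A p q = cs C p q.
  by case: p q => [|p] [|q] le_pn le_qn; rewrite ?cs0l ?cs0r //; apply: eqAC.
apply/matrixP => p q; have := csSS A p q; have := csSS C p q.
rewrite !eqAC ?(ltnW (ltn_ord p)) ?(ltnW (ltn_ord q)) //; lia.
Qed.

Lemma asm_le_cs A B : asm_le A B ->
  forall p q, (p <= n)%N -> (q <= n)%N -> cs B p q <= cs A p q.
Proof. by move=> leAB [|p] [|q] le_pn le_qn; rewrite ?cs0l ?cs0r //; apply: leAB. Qed.

Definition asm_cs A := [/\
  (forall p q, (p <= n)%N -> (q < n)%N -> 0 <= cs A p q.+1 - cs A p q <= 1),
  (forall p q, (p < n)%N -> (q <= n)%N -> 0 <= cs A p.+1 q - cs A p q <= 1),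
  (forall q, (q <= n)%N -> cs A n q = q%:Z) &
  (forall p, (p <= n)%N -> cs A p n = p%:Z)].

Lemma in01 (x : int) : (x \in [:: 0; 1]) = (0 <= x <= 1).
Proof. rewrite !inE; lia. Qed.

Lemma is_asm_cs A : is_asm A -> asm_cs A.
Proof.
case=> _ rowA colA rowsumA colsumA; split.
- move=> p q le_pn lt_qn; rewrite (cs_colS A p (Ordinal lt_qn)) [X in X - _]addrC addrK -in01.
  exact: colA.
- move=> p q lt_pn le_qn; rewrite (cs_rowS A (Ordinal lt_pn)) [X in X - _]addrC addrK -in01.
  exact: rowA.
- elim=> [|q IHq] lt_qn; first by rewrite cs0r.
  rewrite (cs_colS A n (Ordinal lt_qn)) IHq ?(ltnW lt_qn) // sum_ord_lt_geq //.
  rewrite colsumA; lia.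
- elim=> [|p IHp] lt_pn; first by rewrite cs0l.
  rewrite (cs_rowS A (Ordinal lt_pn)) IHp ?(ltnW lt_pn) // sum_ord_lt_geq //.
  rewrite rowsumA; lia.
Qed.

Lemma asm_cs_is_asm A : asm_cs A -> is_asm A.
Proof.
case=> colA rowA lastrowA lastcolA; split.
- move=> i j; rewrite !inE; have := csSS A i j.
  have := rowA i j (ltn_ord i) (ltnW (ltn_ord j)).
  have := rowA i j.+1 (ltn_ord i) (ltn_ord j); lia.
- move=> i m le_mn; rewrite in01; have := cs_rowS A i m.
  have := rowA i m (ltn_ord i) le_mn; lia.
- move=> j m le_mn; rewrite in01; have := cs_colS A m j.
  have := colA m j le_mn (ltn_ord j); lia.
- move=> i; rewrite -(@sum_ord_lt_geq _ n (leqnn n)); have := cs_rowS A i n.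
  have := lastcolA i (ltnW (ltn_ord i)); have := lastcolA i.+1 (ltn_ord i); lia.
- move=> j; rewrite -(@sum_ord_lt_geq _ n (leqnn n)); have := cs_colS A n j.
  have := lastrowA j (ltnW (ltn_ord j)); have := lastrowA j.+1 (ltn_ord j); lia.
Qed.

Lemma cs_rop A i j k l : rect_ok n i j k l ->
  forall p q, (p <= n)%N -> (q <= n)%N -> cs (rop A i j k l) p q = r_cs A i j k l p q.
Proof.
move=> /and4P[i_gt0 _ _ /and3P[k_gt0 _ _]].
apply: cs_mx_of_cs => [q|p]; rewrite /r_cs /rind ?cs0l ?cs0r;
  case: ifP => _; try case: ifP => _; lia.
Qed.

Lemma forall_unit_rect (P : 'I_n.+1 -> 'I_n.+1 -> bool) i k :
  (i <= n)%N -> (k <= n)%N ->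
  [forall p : 'I_n.+1, forall q : 'I_n.+1,
     ((i <= p < i.+1)%N && (k <= q < k.+1)%N) ==> P p q] =
  P (inord i) (inord k).
Proof.
move=> le_in le_kn; apply/idP/idP => [/forallP/(_ (inord i))/forallP/(_ (inord k))|Pik].
  by rewrite !inordK // !leqnn.
apply/forallP => p; apply/forallP => q; apply/implyP; rewrite !ltnS -!eqn_leq.
by case/andP => /eqP ip /eqP kq; rewrite -[p]inord_val -[q]inord_val -ip -kq.
Qed.

Lemma essential_pointE B i k : essential_point B i k =
  [&& (0 < i < n)%N, (0 < k < n)%N &
      [&& cs B i k == cs B i k.-1, cs B i k.+1 == cs B i k + 1,
          cs B i k == cs B i.-1 k & cs B i.+1 k == cs B i k + 1]].
Proof.
rewrite /essential_point /Defs.inE /rect_ok !ltnSn /=.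
case lt_in: (i < n)%N; last by rewrite /= !andbF.
case lt_kn: (k < n)%N; last by rewrite /= !andbF.
by rewrite forall_unit_rect ?inordK ?ltnS ?(ltnW lt_in) ?(ltnW lt_kn) //= !andbT -!andbA.
Qed.

Lemma inEstar_unitE B i k : inEstar B i i.+1 k k.+1 =
  [&& (0 < i < n)%N, (0 < k < n)%N &
      [&& cs B i k == cs B i k.-1 + 1, cs B i k.+1 == cs B i k,
          cs B i k == cs B i.-1 k + 1 & cs B i.+1 k == cs B i k]].
Proof.
rewrite /inEstar /rect_ok !ltnSn /=.
case lt_in: (i < n)%N; last by rewrite /= !andbF.
case lt_kn: (k < n)%N; last by rewrite /= !andbF.
by rewrite forall_unit_rect ?inordK ?ltnS ?(ltnW lt_in) ?(ltnW lt_kn) //= !andbT -!andbA.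
Qed.

Definition point_ind (i k p q : nat) : int := ((p == i) && (q == k))%:R.

Lemma rind_unit i k p q : rind i i.+1 k k.+1 p q = point_ind i k p q.
Proof. by rewrite /rind /point_ind !ltnS -!eqn_leq (eq_sym i) (eq_sym k). Qed.

Lemma essential_point_rect_ok B i k : essential_point B i k -> rect_ok n i i.+1 k k.+1.
Proof. by case/andP. Qed.

Lemma essential_point_range B i k : essential_point B i k -> (0 < i < n)%N /\ (0 < k < n)%N.
Proof. by rewrite essential_pointE => /and3P[]. Qed.

Lemma cs_rop_ess B i k : essential_point B i k ->
  forall p q, (p <= n)%N -> (q <= n)%N ->
  cs (rop B i i.+1 k k.+1) p q = cs B p q + point_ind i k p q.
Proof.
move=> essB p q le_pn le_qn; rewrite cs_rop ?(essential_point_rect_ok essB) //.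
by rewrite /r_cs -[Defs.inE _ _ _ _ _]/(essential_point B i k) essB rind_unit.
Qed.

(* The four equalities defining an essential point are exactly what keeps the
   row and column steps of the new corner sums in [0, 1]. *)
Lemma asm_cs_rop_ess B i k : asm_cs B -> essential_point B i k ->
  asm_cs (rop B i i.+1 k k.+1).
Proof.
case=> colB rowB lastrowB lastcolB essB; have csC := cs_rop_ess essB.
have := essB; rewrite essential_pointE.
case/and3P=> /andP[i_gt0 lt_in] /andP[k_gt0 lt_kn] /and4P[/eqP el /eqP er /eqP eu /eqP ed].
split.
- move=> p q le_pn lt_qn; rewrite !csC // 1?ltnW //; have := colB p q le_pn lt_qn.
  rewrite /point_ind; case: (eqVneq p i) => [->|]; last by lia.
  case: (eqVneq q.+1 k) => [eqk|]; first by move: el; rewrite -eqk /=; lia.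
  case: (eqVneq q k) => [eqk|]; last by lia.
  by move: er; rewrite eqk; lia.
- move=> p q lt_pn le_qn; rewrite !csC // 1?ltnW //; have := rowB p q lt_pn le_qn.
  rewrite /point_ind; case: (eqVneq q k) => [->|]; last by lia.
  case: (eqVneq p.+1 i) => [eqi|]; first by move: eu; rewrite -eqi /=; lia.
  case: (eqVneq p i) => [eqi|]; last by lia.
  by move: ed; rewrite eqi; lia.
- by move=> q le_qn; rewrite csC // lastrowB // /point_ind; lia.
- by move=> p le_pn; rewrite csC // lastcolB // /point_ind; lia.
Qed.

Lemma point_step_between B C E i k :
  (forall p q, (p <= n)%N -> (q <= n)%N -> cs C p q = cs B p q + point_ind i k p q) ->
  asm_le C E -> asm_le E B -> E = C \/ E = B.
Proof.
move=> csC /asm_le_cs leCE /asm_le_cs leEB.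
have [ltBE|geBE] := ltrP (cs B i k) (cs E i k); [left|right];
  apply: cs_inj => p q /andP[_ le_pn] /andP[_ le_qn];
  have := leCE p q le_pn le_qn; have := leEB p q le_pn le_qn; rewrite csC // /point_ind;
  (case: (eqVneq p i) => [->|_] /=; last by lia); case: (eqVneq q k) => [->|_] /=; lia.
Qed.

Lemma rop_ess_lt B i k : essential_point B i k -> asm_lt (rop B i i.+1 k k.+1) B.
Proof.
move=> essB; have csC := cs_rop_ess essB.
have [/andP[_ lt_in] /andP[_ lt_kn]] := essential_point_range essB.
split=> [p q /andP[_ le_pn] /andP[_ le_qn]|eqCB].
  by rewrite csC // /point_ind; lia.
by have := csC i k (ltnW lt_in) (ltnW lt_kn); rewrite eqCB /point_ind !eqxx; lia.
Qed.

Lemma rop_ess_covers B i k : is_asm B -> essential_point B i k ->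
  is_asm (rop B i i.+1 k k.+1) /\ asm_covers (rop B i i.+1 k k.+1) B.
Proof.
move=> asmB essB; have asmC := asm_cs_is_asm (asm_cs_rop_ess (is_asm_cs asmB) essB).
split=> //; split=> //; first exact: rop_ess_lt.
move=> [E [_ [leCE neCE] [leEB neEB]]].
by case: (point_step_between (cs_rop_ess essB) leCE leEB) => eqE; [apply: neCE|apply: neEB].
Qed.

Lemma exists_max_discrepancy A B : asm_le A B -> A <> B ->
  exists i k, [/\ (i <= n)%N, (k <= n)%N, cs B i k < cs A i k &
    forall p q, (p <= n)%N -> (q <= n)%N -> cs B p q < cs A p q ->
      (p + q)%:Z - 2 * cs B p q <= (i + k)%:Z - 2 * cs B i k].
Proof.
move=> /asm_le_cs leAB neAB.
pose P (x : 'I_n.+1 * 'I_n.+1) := cs B x.1 x.2 < cs A x.1 x.2.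
have [x0 Px0] : exists x0, P x0.
  case: (boolP [exists x, P x]) => [/existsP //|/existsPn noP]; case: neAB.
  apply: cs_inj => p q /andP[_ le_pn] /andP[_ le_qn].
  have := noP (inord p, inord q); rewrite /P /= !inordK //.
  have := leAB p q le_pn le_qn; lia.
pose h (x : 'I_n.+1 * 'I_n.+1) := (x.1 + x.2)%:Z - 2 * cs B x.1 x.2.
have [[i k] Pik maxik] := arg_maxP h Px0.
exists i, k; split=> [||//|]; try by rewrite -ltnS.
move=> p q le_pn le_qn ltBA.
by have := maxik (inord p, inord q); rewrite /P /h /= !inordK //; apply.
Qed.

(* A neighbour of [(i, k)] either lies outside the set where [cs B < cs A],
   which pins down the corner sums of [B] there, or lies inside it and then does
   not increase the objective; either way the corresponding equality defining
   an essential point holds. *)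
Lemma essential_point_of_max_discrepancy A B i k : asm_cs A -> asm_cs B ->
  (i <= n)%N -> (k <= n)%N -> cs B i k < cs A i k ->
  (forall p q, (p <= n)%N -> (q <= n)%N -> cs B p q < cs A p q ->
     (p + q)%:Z - 2 * cs B p q <= (i + k)%:Z - 2 * cs B i k) ->
  essential_point B i k.
Proof.
case=> colA rowA lastrowA lastcolA [colB rowB lastrowB lastcolB] le_in le_kn ltBA maxik.
have i_gt0 : (0 < i)%N by case: (posnP i) ltBA => [->|//]; rewrite !cs0l.
have k_gt0 : (0 < k)%N by case: (posnP k) ltBA => [->|//]; rewrite !cs0r.
have lt_in : (i < n)%N.
  by case: (ltngtP i n) le_in ltBA => // -> _; rewrite lastrowA ?lastrowB // ltxx.
have lt_kn : (k < n)%N.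
  by case: (ltngtP k n) le_kn ltBA => // -> _; rewrite lastcolA ?lastcolB // ltxx.
have lt_k1n : (k.-1 < n)%N by apply: leq_ltn_trans (leq_pred k) lt_kn.
have lt_i1n : (i.-1 < n)%N by apply: leq_ltn_trans (leq_pred i) lt_in.
rewrite essential_pointE i_gt0 lt_in k_gt0 lt_kn /=; apply/and4P; split; apply/eqP.
- have := maxik i k.-1 le_in (ltnW lt_k1n).
  have := colB i k.-1 le_in lt_k1n; have := colA i k.-1 le_in lt_k1n.
  rewrite prednK //; lia.
- have := maxik i k.+1 le_in lt_kn.
  have := colB i k le_in lt_kn; have := colA i k le_in lt_kn; lia.
- have := maxik i.-1 k (ltnW lt_i1n) le_kn.
  have := rowB i.-1 k lt_i1n le_kn; have := rowA i.-1 k lt_i1n le_kn.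
  rewrite prednK //; lia.
- have := maxik i.+1 k lt_in le_kn.
  have := rowB i k lt_in le_kn; have := rowA i k lt_in le_kn; lia.
Qed.

Lemma covers_rop_ess A B : is_asm B -> asm_covers A B ->
  exists i k, essential_point B i k /\ A = rop B i i.+1 k k.+1.
Proof.
move=> asmB [asmA _ [leAB neAB] no_mid].
have [i [k [le_in le_kn ltBA maxik]]] := exists_max_discrepancy leAB neAB.
have essB := essential_point_of_max_discrepancy (is_asm_cs asmA) (is_asm_cs asmB)
  le_in le_kn ltBA maxik.
exists i, k; split=> //.
have [asmC [_ _ ltCB _]] := rop_ess_covers asmB essB.
have leAC : asm_le A (rop B i i.+1 k k.+1).
  move=> p q /andP[_ le_pn] /andP[_ le_qn]; rewrite cs_rop_ess // /point_ind.
  have := asm_le_cs leAB le_pn le_qn.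
  (case: (eqVneq p i) => [->|_] /=; last by lia); case: (eqVneq q k) => [->|_] /=; lia.
case: (eqVneq A (rop B i i.+1 k k.+1)) => // /eqP neAC.
by case: no_mid; exists (rop B i i.+1 k k.+1).
Qed.

Lemma rop_rop_ess B i k : essential_point B i k ->
  rop (rop B i i.+1 k k.+1) i i.+1 k k.+1 = B.
Proof.
move=> essB; have csC := cs_rop_ess essB.
have okik := essential_point_rect_ok essB.
have := essB; rewrite essential_pointE.
case/and3P=> /andP[i_gt0 lt_in] /andP[k_gt0 lt_kn] /and4P[/eqP el /eqP er /eqP eu /eqP ed].
have le_k1n : (k.-1 <= n)%N by rewrite (leq_trans (leq_pred k)) 1?ltnW.
have le_i1n : (i.-1 <= n)%N by rewrite (leq_trans (leq_pred i)) 1?ltnW.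
have notE : ~~ essential_point (rop B i i.+1 k k.+1) i k.
  rewrite essential_pointE !csC ?(ltnW lt_in) ?(ltnW lt_kn) // /point_ind.
  by rewrite !eqxx; apply/negP; lia.
have starC : inEstar (rop B i i.+1 k k.+1) i i.+1 k k.+1.
  rewrite inEstar_unitE i_gt0 lt_in k_gt0 lt_kn /= !csC ?(ltnW lt_in) ?(ltnW lt_kn) //.
  by rewrite /point_ind; apply/and4P; split; apply/eqP; lia.
apply: cs_inj => p q /andP[_ le_pn] /andP[_ le_qn].
rewrite cs_rop // /r_cs -[Defs.inE _ _ _ _ _]/(essential_point _ i k) (negbTE notE) starC.
by rewrite rind_unit csC // addrK.
Qed.

Lemma beta_rop_ess_lt B i k : essential_point B i k -> beta (rop B i i.+1 k k.+1) < beta B.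
Proof.
move=> essB; have csC := cs_rop_ess essB.
have [/andP[i_gt0 lt_in] /andP[k_gt0 lt_kn]] := essential_point_range essB.
have lt_i1n : (i.-1 < n)%N by rewrite (leq_ltn_trans (leq_pred i)).
have lt_k1n : (k.-1 < n)%N by rewrite (leq_ltn_trans (leq_pred k)).
rewrite /beta ltrD2l ltrN2; apply: (ltr_sum_at (i0 := Ordinal lt_i1n)) => [|p]; last first.
  by apply: ler_sum => q _; rewrite csC // lerDl.
apply: (ltr_sum_at (i0 := Ordinal lt_k1n)) => [|q] /=;
  rewrite csC ?prednK ?(ltnW lt_in) ?(ltnW lt_kn) //.
  by rewrite ltrDl /point_ind !eqxx.
by rewrite lerDl.
Qed.

Lemma covers_edge A B : is_asm B -> asm_covers A B -> asm_edge A B.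
Proof.
move=> asmB /(covers_rop_ess asmB) [i [k [essB ->]]].
exists i, i.+1, k, k.+1; split.
- exact: essential_point_rect_ok essB.
- by rewrite rop_rop_ess.
- exact: beta_rop_ess_lt.
Qed.

Lemma rop_ess_inj B i k i' k' : essential_point B i k -> essential_point B i' k' ->
  rop B i i.+1 k k.+1 = rop B i' i'.+1 k' k'.+1 -> i = i' /\ k = k'.
Proof.
move=> essB essB' eqC.
have [/andP[_ lt_in] /andP[_ lt_kn]] := essential_point_range essB.
have := cs_rop_ess essB (ltnW lt_in) (ltnW lt_kn).
rewrite eqC cs_rop_ess ?(ltnW lt_in) ?(ltnW lt_kn) // /point_ind !eqxx.
by case: (eqVneq i i') => [->|]; case: (eqVneq k k') => [->|] //=; lia.
Qed.

End CoveringRelations.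

Theorem mainTheorem7 (n : nat) (B : 'M[int]_n) (hB : is_asm B) :
  [/\ (forall A : 'M[int]_n, is_asm A ->
         (asm_covers A B <->
          exists i k, essential_point B i k /\ A = rop B i i.+1 k k.+1)),
      (forall i k, essential_point B i k ->
         is_asm (rop B i i.+1 k k.+1) /\ asm_covers (rop B i i.+1 k k.+1) B),
      (forall i k i' k', essential_point B i k -> essential_point B i' k' ->
         rop B i i.+1 k k.+1 = rop B i' i'.+1 k' k'.+1 -> i = i' /\ k = k') &
      (forall A : 'M[int]_n, asm_covers A B -> asm_edge A B)].
Proof.
split.
- move=> A _; split; first exact: covers_rop_ess.
  by case=> i [k [essB ->]]; case: (rop_ess_covers hB essB).
- by move=> i k; apply: rop_ess_covers.
- by move=> i k i' k'; apply: rop_ess_inj.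
- by move=> A; apply: covers_edge.
Qed.
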